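(* In the safe linear bandit setting with ROFUL as described in the context (with all its standing assumptions), on the event $\mathcal{E}_{\mathrm{conf}}$, for all $t\in[T]$, $$\theta^\top(x_*-\tilde x_t)\le\frac{2}{\nu}\beta_t\|x_t\|_{V_t^{-1}}.$$
   Context: Safe linear bandit setting: at round $t$ the learner plays $x_t$ in a closed set $\mathcal{X}\subseteq\mathbb{R}^d$ and observes $y_t=\theta^\top x_t+\epsilon_t$, $z_t=a^\top x_t+\eta_t$, with $\theta,a$ unknown and $b>0$ known; $\mathcal{Y}=\{x\in\mathcal{X}:a^\top x\le b\}$, $x_*\in\arg\max_{\mathcal{Y}}\theta^\top x$. Standing assumptions: $\mathcal{X}$ star-convex w.r.t. the origin, $\|x\|\le1$ on $\mathcal{X}$, $\theta^\top x_*>0$; $\|a\|\le S_a$, $\|\theta\|\le S_\theta$, $S=\max(S_a,S_\theta)$, $\nu=b/S_a\le1$. Parameters $\rho>0$, $\delta\in(0,1)$, $\lambda\ge1$. ROFUL: $V_t=\lambda I+\sum_{k<t}x_kx_k^\top$, $\hat a_t=V_t^{-1}\sum_{k<t}x_kz_k$, $\hat\theta_t=V_t^{-1}\sum_{k<t}x_ky_k$, $\beta_t=\rho\sqrt{d\log\left(\frac{1+(t-1)/\lambda}{\delta/2}\right)}+\sqrt\lambda S$, $\|x\|_M=\sqrt{x^\top Mx}$; $\mathcal{Y}_t^p=\{x\in\mathcal{X}:\hat a_t^\top x+\beta_t\|x\|_{V_t^{-1}}\le b\}$, $\mathcal{Y}_t^o=\{x\in\mathcal{X}:\hat a_t^\top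 x-\beta_t\|x\|_{V_t^{-1}}\le b\}$; $\tilde x_t\in\arg\max_{x\in\mathcal{Y}_t^o}(\hat\theta_t^\top x+\beta_t\|x\|_{V_t^{-1}})$; $\gamma_t=\max(\min(\nu/\|\tilde x_t\|,1),\max\{\mu\in[0,1]:\mu\tilde x_t\in\mathcal{Y}_t^p\})$; play $x_t=\gamma_t\tilde x_t$. $\mathcal{E}_{\mathrm{conf}}$: the event that $|x^\top(\hat\theta_t-\theta)|\le\beta_t\|x\|_{V_t^{-1}}$ and $|x^\top(\hat a_t-a)|\le\beta_t\|x\|_{V_t^{-1}}$ for all $x\in\mathcal{X}$ and all $t\ge1$. *)

From HB Require Import structures.
From mathcomp Require Import all_boot all_order all_algebra.
From mathcomp Require Import all_classical all_reals all_analysis.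
Set Implicit Arguments. Unset Strict Implicit. Unset Printing Implicit Defensive.
Import Order.TTheory GRing.Theory Num.Theory.
Local Open Scope ring_scope.
Local Open Scope classical_set_scope.

Section Defs.
Variables (R : realType) (d : nat).
Notation vec := 'cV[R]_d.

Definition dotp (u v : vec) : R := (u^T *m v) 0 0.
Definition enorm (x : vec) : R := Num.sqrt (dotp x x).
Definition wnorm (M : 'M[R]_d) (x : vec) : R := Num.sqrt ((x^T *m M *m x) 0 0).

Definition Vmat (lam : R) (x : nat -> vec) (t : nat) : 'M[R]_d :=
  lam%:M + \sum_(1 <= k < t) (x k *m (x k)^T).
Definition rls (lam : R) (x : nat -> vec) (w : nat -> R) (t : nat) : vec :=
  invmx (Vmat lam x t) *m \sum_(1 <= k < t) (w k *: x k).
Definition beta (rho delta lam S : R) (t : nat) : R :=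
  rho * Num.sqrt (d%:R * ln ((1 + (t.-1)%:R / lam) / (delta / 2)))
  + Num.sqrt lam * S.

Definition Yp (X : set vec) (ahat : vec) (bt b : R) (Vinv : 'M[R]_d) : set vec :=
  [set x | X x /\ dotp ahat x + bt * wnorm Vinv x <= b].
Definition Yo (X : set vec) (ahat : vec) (bt b : R) (Vinv : 'M[R]_d) : set vec :=
  [set x | X x /\ dotp ahat x - bt * wnorm Vinv x <= b].

(* gamma_t = max( min(nu/||xt||, 1), max{mu in [0,1] : mu xt in Yp} ),
   with the convention nu/0 = +oo (so min(nu/0,1) = 1). *)
Definition gamma_scale (nu : R) (xt : vec) (Ypt : set vec) : R :=
  Num.max (if enorm xt == 0 then 1 else Num.min (nu / enorm xt) 1)
          (sup [set mu : R | 0 <= mu <= 1 /\ Ypt (mu *: xt)]).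
End Defs.

From HB Require Import structures.
From mathcomp Require Import all_boot all_order all_algebra.
From mathcomp Require Import all_classical all_reals all_analysis.
From mathcomp Require Import lra.
Set Implicit Arguments. Unset Strict Implicit. Unset Printing Implicit Defensive.
Import Order.TTheory GRing.Theory Num.Theory.
Local Open Scope ring_scope.
Local Open Scope classical_set_scope.

(* Optimism: on the confidence event the safe optimum x_* lies in the
   optimistic set, so comparing upper confidence bounds at x_* and at the
   maximiser x~_t bounds the gap by twice the width at x~_t.  Since
   ||x~_t|| <= 1 and nu <= 1, the scaling gamma_t is at least nu, so the
   width at the played action x_t = gamma_t x~_t is at least nu times the
   width at x~_t. *)

Section SafeBandit.
Variables (R : realType) (d : nat).
Implicit Types (u v w xs xt : 'cV[R]_d) (M : 'M[R]_d).

Lemma dotpC u v : dotp u v = dotp v u.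
Proof.
rewrite /dotp; have -> : v^T *m u = (u^T *m v)^T by rewrite trmx_mul trmxK.
by rewrite [RHS]mxE.
Qed.

Lemma dotpBr u v w : dotp u (v - w) = dotp u v - dotp u w.
Proof. by rewrite /dotp mulmxBr !mxE. Qed.

Lemma wnorm_ge0 M v : 0 <= wnorm M v.
Proof. exact: sqrtr_ge0. Qed.

Lemma wnormZ M (g : R) v : 0 <= g -> wnorm M (g *: v) = g * wnorm M v.
Proof.
move=> g_ge0; rewrite /wnorm.
have -> : (g *: v)^T = g *: v^T by apply/matrixP => i j; rewrite !mxE.
rewrite -!scalemxAl -scalemxAr scalerA mxE.
by rewrite sqrtrM ?mulr_ge0 // -expr2 sqrtr_sqr ger0_norm.
Qed.

Lemma ler_wnormZ M (c nu g : R) v :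
  0 <= c -> 0 < nu -> nu <= g -> c * wnorm M v <= c / nu * wnorm M (g *: v).
Proof.
move=> c_ge0 nu_gt0 nu_le_g; have w_ge0 := wnorm_ge0 M v.
rewrite wnormZ ?(le_trans (ltW nu_gt0)) //.
rewrite -{1}(divfK (lt0r_neq0 nu_gt0) c) -(mulrA (c / nu)).
by apply: ler_wpM2l; [exact: divr_ge0 c_ge0 (ltW nu_gt0) | exact: ler_wpM2r].
Qed.

Lemma le_gamma_scale (nu : R) xt (Y : set 'cV[R]_d) :
  0 <= nu <= 1 -> enorm xt <= 1 -> nu <= gamma_scale nu xt Y.
Proof.
case/andP=> nu_ge0 nu_le1 xt_le1; rewrite le_max; apply/orP; left.
case: eqP => [_ | /eqP xt_neq0] //.
have xt_gt0 : 0 < enorm xt by rewrite lt_def xt_neq0 sqrtr_ge0.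
by rewrite le_min nu_le1 andbT ler_pdivlMr // ler_piMr.
Qed.

Lemma safe_in_Yo (X : set 'cV[R]_d) (a ahat : 'cV[R]_d) (bt b : R) M u :
  X u -> dotp a u <= b -> `|dotp u (ahat - a)| <= bt * wnorm M u ->
  Yo X ahat bt b M u.
Proof.
move=> Xu safe_u; rewrite dotpBr dotpC [dotp u a]dotpC ler_norml => /andP[_ ?].
by split => //; lra.
Qed.

Lemma optimistic_gap_le (theta thhat : 'cV[R]_d) (r : 'cV[R]_d -> R) xs xt :
  `|dotp xs (thhat - theta)| <= r xs -> `|dotp xt (thhat - theta)| <= r xt ->
  dotp thhat xs + r xs <= dotp thhat xt + r xt ->
  dotp theta (xs - xt) <= 2 * r xt.
Proof.
rewrite !dotpBr ![dotp xs _]dotpC ![dotp xt _]dotpC.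
by rewrite !ler_norml => /andP[? _] /andP[_ ?] ?; lra.
Qed.

Lemma beta_ge0 (rho delta lam S : R) (t : nat) :
  0 <= rho -> 0 <= S -> 0 <= beta d rho delta lam S t.
Proof. by move=> ? ?; rewrite /beta addr_ge0 ?mulr_ge0 ?sqrtr_ge0. Qed.

End SafeBandit.

Theorem lemma4 (R : realType) (d : nat) (X : set 'cV[R]_d)
  (theta a : 'cV[R]_d) (b Sa Stheta rho delta lam : R) (T : nat)
  (x xt : nat -> 'cV[R]_d) (eps eta : nat -> R) (xstar : 'cV[R]_d) :
  (* standing assumptions *)
  closed (X : set 'M[R^o]_(d, 1)) ->
  (forall x0, X x0 -> forall mu : R, 0 <= mu <= 1 -> X (mu *: x0)) ->
  (forall x0, X x0 -> enorm x0 <= 1) ->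
  0 < b -> 0 < Sa ->
  enorm a <= Sa -> enorm theta <= Stheta ->
  b / Sa <= 1 ->
  0 < rho -> 0 < delta < 1 -> 1 <= lam ->
  (* x_* is an optimal safe action *)
  X xstar -> dotp a xstar <= b ->
  (forall x0, X x0 -> dotp a x0 <= b -> dotp theta x0 <= dotp theta xstar) ->
  0 < dotp theta xstar ->
  let S := Num.max Sa Stheta in
  let nu := b / Sa in
  let y := fun k => dotp theta (x k) + eps k in
  let z := fun k => dotp a (x k) + eta k in
  let V := Vmat lam x in
  let Vinv := fun t => invmx (V t) in
  let ahat := rls lam x z in
  let thhat := rls lam x y in
  let bt := beta d rho delta lam S in
  let Ypt := fun t => Yp X (ahat t) (bt t) b (Vinv t) in
  let Yot := fun t => Yo X (ahat t) (bt t) b (Vinv t) in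
  (* ROFUL: xt t is a maximizer of the UCB over the optimistic set,
     and the played action is x t = gamma_t xt t *)
  (forall t, (1 <= t)%N ->
     Yot t (xt t) /\
     (forall x0, Yot t x0 ->
        dotp (thhat t) x0 + bt t * wnorm (Vinv t) x0
        <= dotp (thhat t) (xt t) + bt t * wnorm (Vinv t) (xt t)) /\
     x t = gamma_scale nu (xt t) (Ypt t) *: xt t) ->
  (* the event E_conf *)
  (forall t, (1 <= t)%N -> forall x0, X x0 ->
     `|dotp x0 (thhat t - theta)| <= bt t * wnorm (Vinv t) x0 /\
     `|dotp x0 (ahat t - a)| <= bt t * wnorm (Vinv t) x0) ->
  forall t, (1 <= t <= T)%N ->
    dotp theta (xstar - xt t) <= 2 / nu * bt t * wnorm (Vinv t) (x t).
Proof.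
move=> _ _ X_le1 b_gt0 Sa_gt0 _ _ nu_le1 rho_gt0 _ _ Xs safe_s _ _.
move=> S nu y z V Vinv ahat thhat bt Ypt Yot roful conf t /andP[t_ge1 _].
have [[Xxt _] [ucb_max ->]] := roful t t_ge1.
have [conf_th_s conf_a_s] := conf t t_ge1 xstar Xs.
have [conf_th_xt _] := conf t t_ge1 (xt t) Xxt.
have nu_gt0 : 0 < nu by rewrite divr_gt0.
have bt_ge0 : 0 <= bt t.
  by apply: beta_ge0; [exact: ltW | rewrite /S le_max (ltW Sa_gt0)].
have gap := optimistic_gap_le (r := fun u => bt t * wnorm (Vinv t) u)
  conf_th_s conf_th_xt (ucb_max xstar (safe_in_Yo Xs safe_s conf_a_s)).
apply: (le_trans gap); rewrite mulrA [2 / nu * _]mulrAC.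
apply: ler_wnormZ; [exact: mulr_ge0 | exact: nu_gt0 |].
apply: le_gamma_scale; last exact: X_le1.
by rewrite (ltW nu_gt0) nu_le1.
Qed.
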